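(* For $\lambda>0$ let $\mathbf u^\lambda$ be the unique continuous viscosity solution of $(B+\lambda\,\mathrm{Id})\mathbf u+\mathbb H(x,D\mathbf u)=c(\mathbb H)\mathbbm 1$ in $M$. Then the family $\{\mathbf u^\lambda\mid\lambda>0\}$ is equi-Lipschitz and equi-bounded on $M$. In particular $\|\lambda\mathbf u^\lambda\|_\infty\to0$ as $\lambda\to0^+$, where $\|\mathbf u\|_\infty=\max_i\sup_M|u_i|$.
   Context: Let $M=\mathbb T^N$ be the flat torus, $T^*M=M\times\mathbb R^N$. Let $H_1,\dots,H_m:T^*M\to\mathbb R$ be continuous with $p\mapsto H_i(x,p)$ convex for every $x$, and with coercive $\alpha,\beta:[0,\infty)\to\mathbb R$ such that $\alpha(|p|)\le H_i(x,p)\le\beta(|p|)$ for all $(x,p)$, $i$. Let $B=(b_{ij})$ be a real $m\times m$ matrix with $b_{ij}\le0$ for $j\neq i$, $\sum_j b_{ij}=0$ for every $i$, and irreducible (for every nonempty proper $\mathcal I\subsetneq\{1,\dots,m\}$ there are $i\in\mathcal I$, $j\notin\mathcal I$ with $b_{ij}\ne0$). With $\mathbbm 1=(1,\dots,1)^T$, the system $(B+\lambda\mathrm{Id})\mathbf u+\mathbb H(x,D\mathbf u)=c\mathbbm 1$ means $\sum_jb_{ij}u_j+\lambda u_i+H_i(x,Du_i)=c$ for $i=1,\dots,m$, understood in the viscosity sense for continuous $\mathbf u:M\to\mathbb R^m$ (subsolution: $H_i(x,p)+((B+\lambda\mathrm{Id})\mathbf u(x))_i\le c$ for $p\in D^+u_i(x)$;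 supersolution: $\ge c$ for $p\in D^-u_i(x)$). The critical value $c(\mathbb H)$ is the unique $c$ for which the system with $\lambda=0$ admits a viscosity solution. For $\lambda>0$ a comparison principle holds and the system has a unique continuous solution. *)

From mathcomp Require Import all_boot.
From Stdlib Require Import Reals.
Open Scope R_scope.

Definition vec (N : nat) := 'I_N -> R.

Definition dot {N} (p q : vec N) : R := \big[Rplus/0]_(k < N) (p k * q k).
Definition enorm {N} (p : vec N) : R := sqrt (dot p p).
Definition vsub {N} (x y : vec N) : vec N := fun k => x k - y k.

(* Functions on the flat torus M = R^N / Z^N are Z^N-periodic functions on R^N. *)
Definition periodic {N} {A : Type} (f : vec N -> A) : Prop :=
  forall (z : 'I_N -> Z) (x : vec N), f (fun k => x k + IZR (z k)) = f x.

Definition cont_fun {N} (f : vec N -> R) : Prop :=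
  forall x eps, 0 < eps -> exists d, 0 < d /\
    forall y, enorm (vsub y x) < d -> Rabs (f y - f x) < eps.

Definition hamiltonians (N m : nat) := 'I_m -> vec N -> vec N -> R.

Definition ham_continuous {N m} (H : hamiltonians N m) : Prop :=
  forall i x p eps, 0 < eps -> exists d, 0 < d /\
    forall y q, enorm (vsub y x) < d -> enorm (vsub q p) < d ->
      Rabs (H i y q - H i x p) < eps.

Definition ham_periodic {N m} (H : hamiltonians N m) : Prop :=
  forall i p, periodic (fun x => H i x p).

Definition ham_convex {N m} (H : hamiltonians N m) : Prop :=
  forall i x (p q : vec N) t, 0 <= t <= 1 ->
    H i x (fun k => t * p k + (1 - t) * q k) <= t * H i x p + (1 - t) * H i x q.

(* alpha : [0,oo) -> R coercive (only values on [0,oo) matter). *)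
Definition coercive (a : R -> R) : Prop :=
  forall K, exists r0, forall r, r0 <= r -> K <= a r.

Definition ham_bounds {N m} (H : hamiltonians N m) (alpha beta : R -> R) : Prop :=
  forall i x p, alpha (enorm p) <= H i x p /\ H i x p <= beta (enorm p).

Definition coupling_matrix {m} (B : 'I_m -> 'I_m -> R) : Prop :=
  (forall i j, i <> j -> B i j <= 0) /\
  (forall i, \big[Rplus/0]_(j < m) B i j = 0) /\
  (forall I : 'I_m -> Prop, (exists i, I i) -> (exists j, ~ I j) ->
     exists i j, I i /\ ~ I j /\ B i j <> 0).

Definition superdiff {N} (u : vec N -> R) (x p : vec N) : Prop :=
  forall eps, 0 < eps -> exists d, 0 < d /\ forall y, enorm (vsub y x) < d ->
    u y - u x - dot p (vsub y x) <= eps * enorm (vsub y x).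

Definition subdiff {N} (u : vec N -> R) (x p : vec N) : Prop :=
  forall eps, 0 < eps -> exists d, 0 < d /\ forall y, enorm (vsub y x) < d ->
    - (eps * enorm (vsub y x)) <= u y - u x - dot p (vsub y x).

Definition sysop {N m} (B : 'I_m -> 'I_m -> R) (lam : R) (u : vec N -> 'I_m -> R)
  (x : vec N) (i : 'I_m) : R :=
  \big[Rplus/0]_(j < m) (B i j * u x j) + lam * u x i.

Definition visc_solution {N m} (H : hamiltonians N m) (B : 'I_m -> 'I_m -> R)
  (lam c : R) (u : vec N -> 'I_m -> R) : Prop :=
  (forall i, cont_fun (fun x => u x i)) /\ periodic u /\
  (forall i x p, superdiff (fun y => u y i) x p -> H i x p + sysop B lam u x i <= c) /\
  (forall i x p, subdiff (fun y => u y i) x p -> c <= H i x p + sysop B lam u x i).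

Definition critical_value {N m} (H : hamiltonians N m) (B : 'I_m -> 'I_m -> R)
  (c : R) : Prop :=
  forall c', (exists u, visc_solution H B 0 c' u) <-> c' = c.

(* The critical solution [w] bounds every [u lam]: doubling the variables, a maximum of
   [u_i(x) - w_i(y) - |x - y|^2 / (2 eps)] over [i, x, y] is attained in one component [i],
   where the coupling term has a sign, so the sub- and supersolution inequalities at the
   common differential [(x - y) / eps] give [lam u_i(x) <= o(1)] as [eps -> 0] ([w] being
   Lipschitz keeps [|x - y| = O(eps)]). Hence [|u lam| <= 2 |w|_oo] and [lam u lam -> 0].
   At a minimum point of [u lam], [0] is a subdifferential, so [lam u lam >= c - beta 0];
   then the subsolution inequality bounds [alpha |p|], hence [|p|], for every
   superdifferential [p] of [u lam] uniformly in [lam], and a periodic function with bounded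
   superdifferentials is Lipschitz (compare it with the cones [y |-> L |y - x0|]). *)

From mathcomp Require Import all_boot all_order all_algebra.
From mathcomp Require Import classical_sets topology normedtype derive Rstruct Rstruct_topology.
From Stdlib Require Import Reals Lra Psatz FunctionalExtensionality IndefiniteDescription Classical.
Open Scope R_scope.

(* Continuity on [R^I] for the sup distance. With [I] a sum of copies of ['I_N], boxes in
   [R^I] are compact and describe several points of [R^N] at once. *)
Definition cont_sup {I : Type} (f : (I -> R) -> R) : Prop :=
  forall x eps, 0 < eps -> exists d, 0 < d /\
    forall y, (forall k, Rabs (y k - x k) < d) -> Rabs (f y - f x) < eps.

Definition in_box {I : Type} (a b z : I -> R) : Prop := forall k, a k <= z k <= b k.

Section BoxCompactness.
Import Order.TTheory GRing.Theory Num.Theory.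
Local Open Scope classical_set_scope.
Local Open Scope ring_scope.
Context {I : finType}.
Implicit Types (f g : (I -> R) -> R) (a b : I -> R).

Let box a b : set {ptws I -> R} := [set z | forall k, `[a k, b k]%classic (z k)].

Let box_compact a b : compact.compact (box a b).
Proof. exact: (tychonoff (fun k => @segment_compact _ (a k) (b k))). Qed.

Let boxE a b z : box a b z <-> in_box a b z.
Proof.
split=> h k; have /= := h k; rewrite in_itv /=.
  by move=> /andP[h1 h2]; split; apply/RleP.
by case=> h1 h2; apply/andP; split; apply/RleP.
Qed.

Let cont_sup_continuous f : cont_sup f -> continuous (f : {ptws I -> R} -> R^o).
Proof.
move=> cf x; apply/cvgrPdist_lt => e /RltP e0.
have [d [/RltP d0 Hd]] := cf x e e0.
have near_coord k : \forall y \near x, `|x k - y k| < d.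
  by move: (@proj_continuous I (fun _ => R^o) k x) => /cvgrPdist_lt; apply.
near=> y.
have y_near : forall k, `|x k - y k| < d by near: y; exact: filter_forall near_coord.
apply/RltP; rewrite -RabsE Rabs_minus_sym; apply: Hd => k.
by rewrite Rabs_minus_sym; apply/RltP; rewrite RabsE; apply: y_near.
Unshelve. all: end_near.
Qed.

Local Close Scope ring_scope.

Lemma box_max {f a b} : (forall k, a k <= b k) -> cont_sup f ->
  exists c, in_box a b c /\ forall x, in_box a b x -> f x <= f c.
Proof.
move=> ab cf.
have box0 : box a b !=set0 by exists a; apply/boxE => k; split; [apply: Rle_refl|].
have [c /[!inE] /boxE bc maxc] :=
  compact_EVT_max box0 (box_compact a b) (continuous_subspaceT (cont_sup_continuous _ cf)).
by exists c; split=> // x /boxE bx; apply/RleP; apply: maxc; rewrite inE.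
Qed.

Lemma box_pos_lower_bound {f g a b eta} : cont_sup f -> cont_sup g ->
  (forall z, in_box a b z -> eta <= f z -> 0 < g z) ->
  exists d, 0 < d /\ forall z, in_box a b z -> eta <= f z -> d <= g z.
Proof.
move=> cf cg gpos.
pose S := box a b `&` (f : {ptws I -> R} -> R) @^-1` [set r | (eta <= r)%O].
have S_compact : compact.compact S.
  apply: compact_closedI (box_compact a b) _.
  apply: preimage_closed; last exact: closed_ge.
  by move=> x _; apply: cont_sup_continuous.
have SE z : S z <-> in_box a b z /\ eta <= f z.
  by rewrite /S /=; split=> -[/boxE bz fz]; split=> //; apply/RleP.
have [S0|/set0P S_ne] := eqVneq S set0.
  exists 1; split=> [|z bz fz]; first exact: Rlt_0_1.
  by have := proj2 (SE z) (conj bz fz); rewrite S0.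
have [c /[!inE] /SE[bc fc] minc] :=
  compact_EVT_min S_ne S_compact (continuous_subspaceT (cont_sup_continuous _ cg)).
exists (g c); split; first exact: gpos.
by move=> z bz fz; apply/RleP; apply: minc; rewrite inE; apply/SE.
Qed.

End BoxCompactness.

Lemma Rabs_le_between {x y} : Rabs x <= y -> - y <= x <= y.
Proof. by move=> h; have := Rle_abs x; have := Rle_abs (- x); rewrite Rabs_Ropp; lra. Qed.

Section RealSums.
Context {n : nat}.
Implicit Types F G : 'I_n -> R.
Local Notation sum F := (\big[Rplus/0]_(k < n) F k).

Lemma sumRD F G : sum (fun k => F k + G k) = sum F + sum G.
Proof. exact: big_split. Qed.

Lemma sumRZ c F : sum (fun k => c * F k) = c * sum F.
Proof. by rewrite -big_distrr. Qed.

Lemma sumR_ge0 F : (forall k, 0 <= F k) -> 0 <= sum F.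
Proof. by move=> F0; apply: (big_ind (fun x => 0 <= x)) => //; [lra | move=> x y; lra]. Qed.

Lemma sumR_le F G : (forall k, F k <= G k) -> sum F <= sum G.
Proof. by move=> FG; apply: (big_ind2 (fun x y => x <= y)) => //; [lra | move=> x1 x2 y1 y2; lra]. Qed.

Lemma sumR_term_le F j : (forall k, 0 <= F k) -> F j <= sum F.
Proof.
move=> F0; rewrite (bigD1 j) // -{1}(Rplus_0_r (F j)); apply: Rplus_le_compat_l.
by apply: (big_ind (fun x => 0 <= x)) => //; [lra | move=> x y /=; lra].
Qed.

Lemma Rabs_sumR_le F : Rabs (sum F) <= sum (fun k => Rabs (F k)).
Proof.
apply: (big_ind2 (fun x y => Rabs x <= y)) => [|x1 x2 y1 y2|k _]; last lra.
  by rewrite Rabs_R0; lra.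
by have := Rabs_triang x1 y1; lra.
Qed.

Lemma sumR_const c : sum (fun _ => c) = INR n * c.
Proof.
rewrite big_const_ord; elim: n => [|k IH] /=; first lra.
by rewrite IH; case: k {IH} => /= [|k]; lra.
Qed.

End RealSums.

Section Euclidean.
Context {N : nat}.
Implicit Types p q a h x y : vec N.

Lemma dot_ge0 p : 0 <= dot p p.
Proof. by apply: sumR_ge0 => k; nra. Qed.

Lemma enorm_ge0 p : 0 <= enorm p.
Proof. exact: sqrt_pos. Qed.

Lemma enorm_sqr p : enorm p * enorm p = dot p p.
Proof. exact/sqrt_sqrt/dot_ge0. Qed.

Lemma dotC p q : dot p q = dot q p.
Proof. by apply: eq_bigr => k _; ring. Qed.

Lemma dotZl c p q : dot (fun k => c * p k) q = c * dot p q.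
Proof. by rewrite /dot -sumRZ; apply: eq_bigr => k _; ring. Qed.

Lemma dot0l q : dot (fun _ => 0) q = 0.
Proof.
rewrite /dot (eq_bigr (fun _ => 0)) => [|k _]; last ring.
by rewrite sumR_const; ring.
Qed.

Lemma dot_expand a h t :
  dot (fun k => a k + t * h k) (fun k => a k + t * h k) =
  dot a a + 2 * t * dot a h + t * t * dot h h.
Proof.
rewrite /dot -!sumRZ -!sumRD.
by apply: eq_bigr => k _; ring.
Qed.

Lemma coord_le_enorm p k : Rabs (p k) <= enorm p.
Proof.
rewrite -sqrt_Rsqr_abs /Rsqr /enorm /dot; apply: sqrt_le_1_alt.
by apply: (sumR_term_le (fun j => p j * p j) k) => j; nra.
Qed.

Lemma enorm_le_coord_bound p d : 0 <= d -> (forall k, Rabs (p k) <= d) ->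
  enorm p <= (INR N + 1) * d.
Proof.
move=> d0 pd; have N0 := pos_INR N.
have dot_le : dot p p <= INR N * (d * d).
  rewrite /dot -sumR_const; apply: sumR_le => k.
  rewrite -(Rabs_pos_eq (p k * p k)) ?Rabs_mult; last nra.
  by have := pd k; have := Rabs_pos (p k); nra.
rewrite -(sqrt_square ((INR N + 1) * d)); last nra.
by apply: sqrt_le_1_alt; nra.
Qed.

Lemma enorm_eq0 p : enorm p = 0 -> forall k, p k = 0.
Proof.
move=> p0 k; have := coord_le_enorm p k; rewrite p0 => pk.
have [//|pk0] := Req_dec (p k) 0.
by have := Rabs_no_R0 _ pk0; have := Rabs_pos (p k); lra.
Qed.

Lemma dot_eq0l p q : (forall k, p k = 0) -> dot p q = 0.
Proof.
by move=> p0; rewrite -(dot0l q); apply: eq_bigr => k _; rewrite p0.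
Qed.

Lemma cauchy_schwarz p q : dot p q <= enorm p * enorm q.
Proof.
have [/enorm_eq0/dot_eq0l -> | p0] := Req_dec (enorm p) 0.
  by have := enorm_ge0 p; have := enorm_ge0 q; nra.
have [/enorm_eq0/dot_eq0l | q0] := Req_dec (enorm q) 0.
  by rewrite dotC => ->; have := enorm_ge0 p; have := enorm_ge0 q; nra.
have a0 : 0 < enorm p by have := enorm_ge0 p; lra.
have b0 : 0 < enorm q by have := enorm_ge0 q; lra.
have := dot_ge0 (fun k => p k + (- enorm p / enorm q) * q k).
rewrite dot_expand -!enorm_sqr.
set a := enorm p in a0 *; set b := enorm q in b0 *.
have -> : - a / b * (- a / b) * (b * b) = a * a by field; lra.
have -> : 2 * (- a / b) * dot p q = - 2 * a * (dot p q / b) by field; lra.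
move=> h; have : dot p q / b <= a by nra.
have -> : dot p q = dot p q / b * b by field; lra.
by nra.
Qed.

Lemma enormZ c p : enorm (fun k => c * p k) = Rabs c * enorm p.
Proof.
rewrite /enorm dotZl dotC dotZl -Rmult_assoc sqrt_mult_alt; last nra.
by rewrite -/(Rsqr c) sqrt_Rsqr_abs.
Qed.

Lemma dot_ge_opp p q : - (enorm p * enorm q) <= dot p q.
Proof.
have := cauchy_schwarz p (fun k => -1 * q k).
by rewrite dotC dotZl dotC enormZ Rabs_Ropp Rabs_R1; lra.
Qed.

Lemma enorm_triangle p q : enorm (fun k => p k + q k) <= enorm p + enorm q.
Proof.
have := cauchy_schwarz p q; have := enorm_sqr p; have := enorm_sqr q.
have := enorm_ge0 p; have := enorm_ge0 q.
set a := enorm p; set b := enorm q => b0 a0 eb ea cs.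
have -> : (fun k => p k + q k) = (fun k => p k + 1 * q k).
  by apply: functional_extensionality => k; ring.
rewrite /enorm dot_expand -(sqrt_square (a + b)); last lra.
by apply: sqrt_le_1_alt; nra.
Qed.

Lemma vsubC x y : enorm (vsub x y) = enorm (vsub y x).
Proof.
have -> : vsub y x = (fun k => -1 * vsub x y k).
  by apply: functional_extensionality => k; rewrite /vsub; ring.
by rewrite enormZ Rabs_Ropp Rabs_R1; ring.
Qed.

Lemma vsub_add_cancel x y : (fun k => y k + vsub x y k) = x.
Proof. by apply: functional_extensionality => k; rewrite /vsub; ring. Qed.

Lemma vsubxx x : vsub x x = (fun _ => 0).
Proof. by apply: functional_extensionality => k; rewrite /vsub; ring. Qed.

Lemma enorm0 : enorm (fun _ : 'I_N => 0) = 0.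
Proof. by rewrite /enorm dot0l sqrt_0. Qed.

Lemma enorm_dist_le p q : Rabs (enorm p - enorm q) <= enorm (vsub p q).
Proof.
have := enorm_triangle q (vsub p q); have := enorm_triangle p (vsub q p).
rewrite !vsub_add_cancel (vsubC q p).
by move=> *; apply: Rabs_le; lra.
Qed.

(* The tangent-line bound for the concave function [sqrt] at [|w|^2]. *)
Lemma enorm_add_le w h : 0 < enorm w ->
  enorm (fun k => w k + h k) <= enorm w + dot w h / enorm w + dot h h / (2 * enorm w).
Proof.
move=> a0; have hb := enorm_ge0 h; have hc := dot_ge_opp w h.
have -> : (fun k => w k + h k) = (fun k => w k + 1 * h k).
  by apply: functional_extensionality => k; ring.
rewrite {1}/enorm dot_expand -!enorm_sqr.
set a := enorm w in a0 hc *; set b := enorm h in hb hc *; set C := dot w h in hc *.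
set t := C / a; set s := b * b / (2 * a).
have et : a * t = C by rewrite /t; field; lra.
have es : 2 * a * s = b * b by rewrite /s; field; lra.
have tb : - b <= t by apply: (Rmult_le_reg_l a) => //; rewrite et; nra.
have s0 : 0 <= s by rewrite /s; apply: Rle_mult_inv_pos; nra.
rewrite -(sqrt_square (a + t + s)); last nra.
apply: sqrt_le_1_alt.
have -> : (a + t + s) * (a + t + s) = a * a + 2 * (a * t) + 2 * a * s + (t + s) * (t + s) by ring.
by rewrite et es; have := Rle_0_sqr (t + s); rewrite /Rsqr; lra.
Qed.

End Euclidean.

Section SupContinuity.
Context {I : finType}.
Implicit Types f g : (I -> R) -> R.

Definition cont_sup_vec {N} (A : (I -> R) -> vec N) : Prop :=
  forall e, 0 < e -> exists d, 0 < d /\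
    forall x y, (forall k, Rabs (y k - x k) < d) -> forall j, Rabs (A y j - A x j) < e.

Lemma cont_sup_vec_coord {N} (s : 'I_N -> I) : cont_sup_vec (fun z j => z (s j)).
Proof. by move=> e e0; exists e; split=> // x y xy j; apply: xy. Qed.

Lemma cont_sup_vec_const {N} (v : vec N) : cont_sup_vec (fun _ => v).
Proof.
move=> e e0; exists 1; split=> [|x y _ j]; first lra.
by rewrite Rminus_diag Rabs_R0.
Qed.

Lemma cont_sup_vec_add {N} {A P : (I -> R) -> vec N} :
  cont_sup_vec A -> cont_sup_vec P -> cont_sup_vec (fun z j => A z j + P z j).
Proof.
move=> cA cP e e0.
have [d1 [d10 h1]] := cA (e / 2) ltac:(lra).
have [d2 [d20 h2]] := cP (e / 2) ltac:(lra).
exists (Rmin d1 d2); split=> [|x y xy j]; first exact: Rmin_pos.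
have := h1 x y (fun k => Rlt_le_trans _ _ _ (xy k) (Rmin_l _ _)) j.
have := h2 x y (fun k => Rlt_le_trans _ _ _ (xy k) (Rmin_r _ _)) j.
have -> : A y j + P y j - (A x j + P x j) = (A y j - A x j) + (P y j - P x j) by ring.
by have := Rabs_triang (A y j - A x j) (P y j - P x j); lra.
Qed.

Lemma cont_sup_vec_sub {N} {A P : (I -> R) -> vec N} :
  cont_sup_vec A -> cont_sup_vec P -> cont_sup_vec (fun z j => A z j - P z j).
Proof.
move=> cA cP; apply: (cont_sup_vec_add cA) => e /cP[d [d0 hd]].
exists d; split=> // x y xy j.
have -> : - P y j - - P x j = - (P y j - P x j) by ring.
by rewrite Rabs_Ropp; apply: hd.
Qed.

Lemma enorm_lt_coord_bound {N} (p : vec N) e : 0 < e ->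
  (forall k, Rabs (p k) < e / (INR N + 2)) -> enorm p < e.
Proof.
move=> e0 pe; have N0 := pos_INR N.
have d0 : 0 <= e / (INR N + 2) by apply: Rle_mult_inv_pos; lra.
apply: Rle_lt_trans (enorm_le_coord_bound p _ d0 (fun k => Rlt_le _ _ (pe k))) _.
apply: (Rmult_lt_reg_r (INR N + 2)); first lra.
by field_simplify; lra.
Qed.

Lemma cont_sup_comp {N} {u : vec N -> R} {A} : cont_fun u -> cont_sup_vec A -> cont_sup (fun z => u (A z)).
Proof.
move=> cu cA x e e0; have N0 := pos_INR N.
have [d [d0 hd]] := cu (A x) e e0.
have [d' [d'0 hd']] := cA (d / (INR N + 2)) ltac:(apply: Rdiv_lt_0_compat; lra).
exists d'; split=> // y xy; apply: hd.
by apply: enorm_lt_coord_bound => // k; apply: hd'.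
Qed.

Lemma cont_sup_ham {N m} {H : hamiltonians N m} i {A P} :
  ham_continuous H -> cont_sup_vec A -> cont_sup_vec P -> cont_sup (fun z => H i (A z) (P z)).
Proof.
move=> cH cA cP x e e0; have N0 := pos_INR N.
have [d [d0 hd]] := cH i (A x) (P x) e e0.
have [d1 [d10 hd1]] := cA (d / (INR N + 2)) ltac:(apply: Rdiv_lt_0_compat; lra).
have [d2 [d20 hd2]] := cP (d / (INR N + 2)) ltac:(apply: Rdiv_lt_0_compat; lra).
exists (Rmin d1 d2); split=> [|y xy]; first exact: Rmin_pos.
apply: hd; apply: enorm_lt_coord_bound => // k.
- by apply: hd1 => j; apply: Rlt_le_trans (xy j) (Rmin_l _ _).
- by apply: hd2 => j; apply: Rlt_le_trans (xy j) (Rmin_r _ _).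
Qed.

Lemma cont_sup_add {f g} : cont_sup f -> cont_sup g -> cont_sup (fun z => f z + g z).
Proof.
move=> cf cg x e e0.
have [d1 [d10 h1]] := cf x (e / 2) ltac:(lra).
have [d2 [d20 h2]] := cg x (e / 2) ltac:(lra).
exists (Rmin d1 d2); split=> [|y xy]; first exact: Rmin_pos.
have := h1 y (fun k => Rlt_le_trans _ _ _ (xy k) (Rmin_l _ _)).
have := h2 y (fun k => Rlt_le_trans _ _ _ (xy k) (Rmin_r _ _)).
have -> : f y + g y - (f x + g x) = (f y - f x) + (g y - g x) by ring.
by have := Rabs_triang (f y - f x) (g y - g x); lra.
Qed.

Lemma cont_sup_sub {f g} : cont_sup f -> cont_sup g -> cont_sup (fun z => f z - g z).
Proof.
move=> cf cg x e e0.
have [d1 [d10 h1]] := cf x (e / 2) ltac:(lra).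
have [d2 [d20 h2]] := cg x (e / 2) ltac:(lra).
exists (Rmin d1 d2); split=> [|y xy]; first exact: Rmin_pos.
have := h1 y (fun k => Rlt_le_trans _ _ _ (xy k) (Rmin_l _ _)).
have := h2 y (fun k => Rlt_le_trans _ _ _ (xy k) (Rmin_r _ _)).
have -> : f y - g y - (f x - g x) = (f y - f x) - (g y - g x) by ring.
by move=> hg hf; apply: Rle_lt_trans (Rabs_triang _ _) _; rewrite Rabs_Ropp; lra.
Qed.

Lemma cont_sup_scal c {f} : cont_sup f -> cont_sup (fun z => c * f z).
Proof.
move=> cf x e e0; have c0 := Rabs_pos c.
have [d [d0 hd]] := cf x (e / (Rabs c + 1)) ltac:(apply: Rdiv_lt_0_compat; lra).
exists d; split=> // y xy; have := hd y xy.
have -> : c * f y - c * f x = c * (f y - f x) by ring.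
rewrite Rabs_mult => fe; have fe0 := Rabs_pos (f y - f x).
apply: (Rle_lt_trans _ (Rabs c * (e / (Rabs c + 1)))); first by apply: Rmult_le_compat_l; lra.
apply: (Rmult_lt_reg_r (Rabs c + 1)); first lra.
by field_simplify; lra.
Qed.

Lemma cont_sup_abs {f} : cont_sup f -> cont_sup (fun z => Rabs (f z)).
Proof.
move=> cf x e e0; have [d [d0 hd]] := cf x e e0; exists d; split=> // y xy.
by have := hd y xy; have := Rabs_triang_inv2 (f y) (f x); lra.
Qed.

Lemma cont_sup_sqr {f} : cont_sup f -> cont_sup (fun z => f z * f z).
Proof.
move=> cf x e e0; set M := 2 * Rabs (f x) + 1.
have M0 : 0 < M by rewrite /M; have := Rabs_pos (f x); lra.
have [d [d0 hd]] := cf x (Rmin 1 (e / M)) ltac:(apply: Rmin_pos; [lra | apply: Rdiv_lt_0_compat; lra]).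
exists d; split=> // y xy; have fy := hd y xy.
have := Rmin_l 1 (e / M); have := Rmin_r 1 (e / M) => m2 m1.
have -> : f y * f y - f x * f x = (f y - f x) * (f y + f x) by ring.
have sum_le : Rabs (f y + f x) <= M.
  have -> : f y + f x = (f y - f x) + 2 * f x by ring.
  apply: (Rle_trans _ _ _ (Rabs_triang _ _)).
  by rewrite Rabs_mult (Rabs_right 2); rewrite /M; lra.
rewrite Rabs_mult.
apply: (Rle_lt_trans _ (Rabs (f y - f x) * M)); first by apply: Rmult_le_compat_l => //; apply: Rabs_pos.
apply: (Rlt_le_trans _ (e / M * M)); first by apply: Rmult_lt_compat_r => //; lra.
by right; field; lra.
Qed.

End SupContinuity.

Lemma enorm_cont N : cont_fun (@enorm N).
Proof.
move=> x e e0; exists e; split=> // y xy.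
exact: Rle_lt_trans (enorm_dist_le y x) xy.
Qed.

Lemma cont_fun_sup {N} {u : vec N -> R} : cont_fun u -> cont_sup u.
Proof. by move=> cu; apply: (cont_sup_comp cu (cont_sup_vec_coord (fun j => j))). Qed.

Section Periodic.
Context {N : nat}.
Implicit Types f : vec N -> R.

Lemma shift_into_unit_cube (x : vec N) :
  exists z : 'I_N -> Z, in_box (fun _ => 0) (fun _ => 1) (fun k => x k + IZR (z k)).
Proof.
exists (fun k => (1 - up (x k))%Z) => k.
by rewrite minus_IZR; have [h1 h2] := archimed (x k); lra.
Qed.

Lemma periodic_max {f} : cont_fun f -> periodic f -> exists c, forall x, f x <= f c.
Proof.
move=> cf pf.
have [c [_ maxc]] := box_max (fun _ => Rle_0_1) (cont_fun_sup cf).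
exists c => x; have [z xz] := shift_into_unit_cube x.
by rewrite -(pf z x); apply: maxc.
Qed.

Lemma periodic_min {f} : cont_fun f -> periodic f -> exists c, forall x, f c <= f x.
Proof.
move=> cf pf.
have [c [_ maxc]] := box_max (fun _ => Rle_0_1) (cont_sup_scal (-1) (cont_fun_sup cf)).
exists c => x; have [z xz] := shift_into_unit_cube x.
by rewrite -(pf z x); have := maxc _ xz; lra.
Qed.

Lemma periodic_bounded {f} : cont_fun f -> periodic f -> exists M, forall x, Rabs (f x) <= M.
Proof.
move=> cf pf; have [c1 h1] := periodic_max cf pf; have [c2 h2] := periodic_min cf pf.
exists (Rabs (f c1) + Rabs (f c2)) => x; apply: Rabs_le.
have := h1 x; have := h2 x; have := Rle_abs (f c1); have := Rle_abs (- f c2).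
by rewrite Rabs_Ropp; have := Rabs_pos (f c1); have := Rabs_pos (f c2); lra.
Qed.

End Periodic.

Lemma periodic_component {N m} {u : vec N -> 'I_m -> R} i : periodic u -> periodic (fun x => u x i).
Proof. by move=> pu z x /=; rewrite (pu z x). Qed.

Section FiniteFamilies.
Context {m : nat}.

Lemma ub_fin_family (T : Type) (f : 'I_m -> T -> R) :
  (forall j, exists M, forall t, f j t <= M) -> exists M, forall j t, f j t <= M.
Proof.
move=> /functional_choice[M fM].
exists (\big[Rplus/0]_(j < m) Rabs (M j)) => j t.
have := fM j t; have := Rle_abs (M j).
by have := sumR_term_le (fun j => Rabs (M j)) j (fun k => Rabs_pos _); lra.
Qed.

Lemma pos_lb_fin_family (P : 'I_m -> R -> Prop) :
  (forall j d d', 0 < d' <= d -> P j d -> P j d') ->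
  (forall j, exists d, 0 < d /\ P j d) -> exists d, 0 < d /\ forall j, P j d.
Proof.
move=> Pmono /functional_choice[D PD].
have D0 j : 0 < D j := proj1 (PD j).
set S := \big[Rplus/0]_(j < m) / D j.
have S0 : 0 <= S by apply: sumR_ge0 => j; exact/Rlt_le/Rinv_0_lt_compat.
exists (/ (1 + S)); split=> [|j]; first by apply: Rinv_0_lt_compat; lra.
apply: (Pmono j (D j)); last exact: (proj2 (PD j)).
split; first by apply: Rinv_0_lt_compat; lra.
rewrite -(Rinv_inv (D j)); apply: Rinv_le_contravar; first exact: Rinv_0_lt_compat.
have := sumR_term_le (fun j => / D j) j (fun k => Rlt_le _ _ (Rinv_0_lt_compat _ (D0 k))).
by rewrite -/S; lra.
Qed.

Lemma ex_argmax_ord (i0 : 'I_m) (F : 'I_m -> R) : exists i, forall j, F j <= F i.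
Proof.
case: (@Order.TotalTheory.arg_maxP _ R 'I_m i0 xpredT F isT) => i _ Fi.
by exists i => j; apply/RleP; apply: Fi.
Qed.

End FiniteFamilies.

Section LipschitzFromSuperdiff.
Context {N : nat}.
Context {u : vec N -> R}.
Hypotheses (u_cont : cont_fun u) (u_periodic : periodic u).

Lemma ex_max_minus_cone (x0 : vec N) L : 0 < L ->
  exists yb, forall y, u y - L * enorm (vsub y x0) <= u yb - L * enorm (vsub yb x0).
Proof.
move=> L0; have [M uM] := periodic_bounded u_cont u_periodic.
have M0 : 0 <= M by have := uM x0; have := Rabs_pos (u x0); lra.
(* outside the box of radius [r] around [x0] the function is below its value at [x0] *)
set r := 2 * M / L + 1.
have Lr : L * r = 2 * M + L by rewrite /r; field; lra.
have r0 : 0 < r.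
  by rewrite /r; have := Rle_mult_inv_pos (2 * M) L ltac:(lra) L0; lra.
have phi_cont : cont_sup (fun y => u y + - L * enorm (vsub y x0)).
  apply: cont_sup_add (cont_fun_sup u_cont) (cont_sup_scal _ (cont_sup_comp (enorm_cont N) _)).
  exact: cont_sup_vec_sub (cont_sup_vec_coord (fun j => j)) (cont_sup_vec_const x0).
have [yb [_ maxyb]] := box_max (a := fun k => x0 k - r) (b := fun k => x0 k + r) (fun k => ltac:(lra)) phi_cont.
have x0_le : u x0 <= u yb - L * enorm (vsub yb x0).
  by have := maxyb x0 (fun k => ltac:(lra)); rewrite vsubxx enorm0; lra.
exists yb => y.
case: (classic (in_box (fun k => x0 k - r) (fun k => x0 k + r) y)) => [inb | out].
  by have := maxyb y inb; lra.
have [k yk] := not_all_ex_not _ _ out.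
have far : r <= enorm (vsub y x0).
  apply: Rle_trans (coord_le_enorm _ k); apply: Rnot_lt_le => /Rlt_le near.
  by apply: yk; have := Rabs_le_between near; rewrite /vsub; lra.
have := uM y; have := Rle_abs (u y); have := uM x0; have := Rle_abs (- u x0); rewrite Rabs_Ropp.
by nra.
Qed.

Lemma superdiff_at_minus_cone_max (x0 yb : vec N) L : 0 < L -> 0 < enorm (vsub yb x0) ->
  (forall y, u y - L * enorm (vsub y x0) <= u yb - L * enorm (vsub yb x0)) ->
  superdiff u yb (fun k => L / enorm (vsub yb x0) * vsub yb x0 k).
Proof.
move=> L0 a0 ybmax e e0; set a := enorm (vsub yb x0) in a0 ybmax *.
exists (2 * a * e / L); split=> [|y yyb]; first by apply: Rdiv_lt_0_compat; nra.
have := ybmax y.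
have -> : vsub y x0 = (fun k => vsub yb x0 k + vsub y yb k).
  by apply: functional_extensionality => k; rewrite /vsub; ring.
have := enorm_add_le (vsub yb x0) (vsub y yb) a0; rewrite dotZl -enorm_sqr.
have := enorm_ge0 (vsub y yb).
set b := enorm (vsub y yb) in yyb *; set C := dot (vsub yb x0) (vsub y yb).
move=> b0 expand.
have quad : L * (b * b / (2 * a)) <= e * b.
  have Lb : L * b <= 2 * a * e.
    by apply: Rlt_le; apply: (Rmult_lt_reg_r (/ L)); [apply: Rinv_0_lt_compat | field_simplify]; lra.
  have -> : L * (b * b / (2 * a)) = (L * b) * (b / (2 * a)) by field; lra.
  have -> : e * b = (2 * a * e) * (b / (2 * a)) by field; lra.
  by apply: Rmult_le_compat_r => //; apply: Rle_mult_inv_pos; lra.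
have := Rmult_le_compat_l L _ _ (Rlt_le _ _ L0) expand.
have -> : L / a * C = L * (C / a) by field; lra.
by rewrite -/a; lra.
Qed.

Lemma le_cone_of_superdiff_bound R0 :
  (forall x p, superdiff u x p -> enorm p <= R0) ->
  forall x y L, 0 < L -> R0 < L -> u y - u x <= L * enorm (vsub y x).
Proof.
move=> sd_bound x0 y0 L L0 RL.
have [yb ybmax] := ex_max_minus_cone x0 L L0.
have [yb0 | ne0] := Req_dec (enorm (vsub yb x0)) 0.
  have ybx0 : yb = x0.
    by apply: functional_extensionality => k; have := enorm_eq0 _ yb0 k; rewrite /vsub; lra.
  by have := ybmax y0; rewrite ybx0 vsubxx enorm0; lra.
have a0 : 0 < enorm (vsub yb x0) by have := enorm_ge0 (vsub yb x0); lra.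
have := sd_bound _ _ (superdiff_at_minus_cone_max x0 yb L L0 a0 ybmax).
rewrite enormZ Rabs_right; last by apply: Rle_ge; apply: Rle_mult_inv_pos; lra.
have -> : L / enorm (vsub yb x0) * enorm (vsub yb x0) = L by field; lra.
lra.
Qed.

Lemma lipschitz_of_superdiff_bound R0 : 0 <= R0 ->
  (forall x p, superdiff u x p -> enorm p <= R0) ->
  forall x y, Rabs (u x - u y) <= R0 * enorm (vsub x y).
Proof.
move=> R00 sd_bound.
suff half : forall x y, u x - u y <= R0 * enorm (vsub x y).
  by move=> x y; apply: Rabs_le; have := half y x; rewrite vsubC; have := half x y; lra.
move=> x y; apply: Rle_plus_epsilon => t t0; have E0 := enorm_ge0 (vsub x y).
have := le_cone_of_superdiff_bound R0 sd_bound y x (R0 + t / (enorm (vsub x y) + 1)).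
have tE : 0 < t / (enorm (vsub x y) + 1) by apply: Rdiv_lt_0_compat; lra.
have : t / (enorm (vsub x y) + 1) * enorm (vsub x y) <= t.
  apply: (Rmult_le_reg_r (enorm (vsub x y) + 1)); first lra.
  by field_simplify; [nra | lra].
by move=> tE' /(_ ltac:(lra) ltac:(lra)); lra.
Qed.

End LipschitzFromSuperdiff.

Section HamiltonianUniformContinuity.
Context {N m : nat} {H : hamiltonians N m}.
Hypotheses (H_cont : ham_continuous H) (H_periodic : ham_periodic H).

Lemma ham_osc_box_lower_bound i Rp eta : 0 < eta ->
  exists d, 0 < d /\ forall x h p, in_box (fun _ => 0) (fun _ => 1) x ->
    in_box (fun _ => - (1)) (fun _ => 1) h -> in_box (fun _ => - Rp) (fun _ => Rp) p ->
    eta <= Rabs (H i (fun k => x k + h k) p - H i x p) -> d <= enorm h.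
Proof.
move=> eta0.
pose X (z : 'I_N + 'I_N + 'I_N -> R) : vec N := fun k => z (inl (inl k)).
pose Hh (z : 'I_N + 'I_N + 'I_N -> R) : vec N := fun k => z (inl (inr k)).
pose P (z : 'I_N + 'I_N + 'I_N -> R) : vec N := fun k => z (inr k).
pose f z := Rabs (H i (fun k => X z k + Hh z k) (P z) - H i (X z) (P z)).
pose a (s : 'I_N + 'I_N + 'I_N) := match s with inl (inl _) => 0 | inl (inr _) => - (1) | inr _ => - Rp end.
pose b (s : 'I_N + 'I_N + 'I_N) := match s with inl (inl _) => 1 | inl (inr _) => 1 | inr _ => Rp end.
have f_cont : cont_sup f.
  apply/cont_sup_abs/cont_sup_sub; apply: cont_sup_ham H_cont _ (cont_sup_vec_coord inr) => //.
  - exact: cont_sup_vec_add (cont_sup_vec_coord _) (cont_sup_vec_coord _).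
  - exact: cont_sup_vec_coord _.
have g_cont : cont_sup (fun z => enorm (Hh z)).
  exact: cont_sup_comp (enorm_cont N) (cont_sup_vec_coord _).
have g_pos z : in_box a b z -> eta <= f z -> 0 < enorm (Hh z).
  move=> _ fz; case: (Rle_or_lt (enorm (Hh z)) 0) => // gz; exfalso.
  have h0 : enorm (Hh z) = 0 by have := enorm_ge0 (Hh z); lra.
  move: fz; rewrite /f (_ : (fun k => X z k + Hh z k) = X z); last first.
    by apply: functional_extensionality => k; rewrite (enorm_eq0 _ h0); ring.
  by rewrite Rminus_diag Rabs_R0; lra.
have [d [d0 hd]] := box_pos_lower_bound f_cont g_cont g_pos.
exists d; split=> // x h p x_box h_box p_box.
pose z s := match s with inl (inl k) => x k | inl (inr k) => h k | inr k => p k end.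
by apply: (hd z); case=> [[k|k]|k] /=.
Qed.

Lemma ham_unif_cont_x i Rp eta : 0 < eta ->
  exists d, 0 < d /\ forall x y p, enorm p <= Rp -> enorm (vsub y x) < d ->
    Rabs (H i y p - H i x p) < eta.
Proof.
move=> eta0; have [d [d0 osc_big]] := ham_osc_box_lower_bound i Rp _ eta0.
exists (Rmin d 1); split=> [|x y p pRp xy]; first by apply: Rmin_pos; lra.
have := Rmin_l d 1; have := Rmin_r d 1 => d_le1 d_led.
have [z xz] := shift_into_unit_cube x.
rewrite -(H_periodic i p z y) -(H_periodic i p z x).
have -> : (fun k => y k + IZR (z k)) = (fun k => x k + IZR (z k) + vsub y x k).
  by apply: functional_extensionality => k; rewrite /vsub; ring.
case: (Rle_or_lt eta (Rabs (H i (fun k => x k + IZR (z k) + vsub y x k) p -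
  H i (fun k => x k + IZR (z k)) p))) => // osc; exfalso.
suff : d <= enorm (vsub y x) by lra.
apply: (osc_big _ _ _ xz _ _ osc) => k.
- by apply: Rabs_le_between; apply: Rle_trans (coord_le_enorm (vsub y x) k) _; lra.
- by apply: Rabs_le_between; apply: Rle_trans (coord_le_enorm p k) pRp.
Qed.

Lemma ham_unif_cont_x_all Rp eta : 0 < eta ->
  exists d, 0 < d /\ forall i x y p, enorm p <= Rp -> enorm (vsub y x) < d ->
    Rabs (H i y p - H i x p) < eta.
Proof.
move=> eta0; apply: pos_lb_fin_family => [i d d' [_ dd] Hd x y p pRp xy | i].
  by apply: Hd => //; lra.
exact: ham_unif_cont_x.
Qed.

End HamiltonianUniformContinuity.

Lemma coupling_row_max_ge0 {m} (B : 'I_m -> 'I_m -> R) i (d : 'I_m -> R) :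
  (forall j, j <> i -> B i j <= 0) -> \big[Rplus/0]_(j < m) B i j = 0 ->
  (forall j, d j <= d i) -> 0 <= \big[Rplus/0]_(j < m) (B i j * d j).
Proof.
move=> B_off B_row d_max.
rewrite (eq_bigr (fun j => B i j * (d j - d i) + d i * B i j)) => [|j _]; last ring.
rewrite sumRD sumRZ B_row Rmult_0_r Rplus_0_r.
apply: sumR_ge0 => j; case: (eqVneq j i) => [->|/eqP ji]; first by rewrite Rminus_diag; lra.
by have := B_off j ji; have := d_max j; nra.
Qed.

Section Doubling.
Context {N : nat}.
Implicit Types (f g v : vec N -> R) (x y : vec N).

Definition doubling f g eps x y := f x - g y - dot (vsub x y) (vsub x y) / (2 * eps).

Lemma doubling_shift f g eps (z : 'I_N -> Z) x y : periodic f -> periodic g ->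
  doubling f g eps (fun k => x k + IZR (z k)) (fun k => y k + IZR (z k)) = doubling f g eps x y.
Proof.
move=> pf pg; rewrite /doubling (pf z x) (pg z y); congr (_ - _ - dot _ _ / _);
  by apply: functional_extensionality => k; rewrite /vsub; ring.
Qed.

Lemma cont_sup_doubling {f g eps} : cont_fun f -> cont_fun g -> 0 < eps ->
  cont_sup (fun z : 'I_N + 'I_N -> R => doubling f g eps (fun k => z (inl k)) (fun k => z (inr k))).
Proof.
move=> cf cg eps0.
pose X (z : 'I_N + 'I_N -> R) : vec N := fun k => z (inl k).
pose Y (z : 'I_N + 'I_N -> R) : vec N := fun k => z (inr k).
have -> : (fun z => doubling f g eps (X z) (Y z)) = (fun z => f (X z) - g (Y z) -
    / (2 * eps) * (enorm (vsub (X z) (Y z)) * enorm (vsub (X z) (Y z)))).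
  by apply: functional_extensionality => z; rewrite /doubling enorm_sqr; field; lra.
apply: cont_sup_sub; first apply: cont_sup_sub.
- exact: cont_sup_comp cf (cont_sup_vec_coord inl).
- exact: cont_sup_comp cg (cont_sup_vec_coord inr).
apply/cont_sup_scal/cont_sup_sqr/(cont_sup_comp (enorm_cont N)).
exact: cont_sup_vec_sub (cont_sup_vec_coord inl) (cont_sup_vec_coord inr).
Qed.

Lemma ex_max_doubling {f g} eps : cont_fun f -> periodic f -> cont_fun g -> periodic g -> 0 < eps ->
  exists xb yb, forall x y, doubling f g eps x y <= doubling f g eps xb yb.
Proof.
move=> cf pf cg pg eps0.
have [Mf fM] := periodic_bounded cf pf; have [Mg gM] := periodic_bounded cg pg.
have Mf0 : 0 <= Mf by have := fM (fun _ => 0); have := Rabs_pos (f (fun _ => 0)); lra.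
have Mg0 : 0 <= Mg by have := gM (fun _ => 0); have := Rabs_pos (g (fun _ => 0)); lra.
(* beyond [|x - y|^2 = K] the doubling is below its value at [(0, 0)] *)
set K := 4 * eps * (Mf + Mg); set r := 1 + K.
have K0 : 0 <= K by rewrite /K; nra.
pose X (z : 'I_N + 'I_N -> R) : vec N := fun k => z (inl k).
pose Y (z : 'I_N + 'I_N -> R) : vec N := fun k => z (inr k).
pose a (s : 'I_N + 'I_N) := match s with inl _ => 0 | inr _ => - r end.
pose b (s : 'I_N + 'I_N) := match s with inl _ => 1 | inr _ => 1 + r end.
pose pair x y (s : 'I_N + 'I_N) := match s with inl k => x k | inr k => y k end.
have [zb [_ zb_max]] :=
  box_max (a := a) (b := b) ltac:(case=> k /=; rewrite /r; lra) (cont_sup_doubling cf cg eps0).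
exists (X zb), (Y zb) => x y.
have [D_big | D_small] := Rlt_or_le K (dot (vsub x y) (vsub x y)).
  apply: Rle_trans (zb_max (pair (fun _ => 0) (fun _ => 0)) _); last by case=> k /=; rewrite /r; lra.
  rewrite /doubling /X /Y /= vsubxx dot0l.
  have : K / (2 * eps) < dot (vsub x y) (vsub x y) / (2 * eps).
    by apply: Rmult_lt_compat_r => //; apply: Rinv_0_lt_compat; lra.
  have -> : K / (2 * eps) = 2 * (Mf + Mg) by rewrite /K; field; lra.
  have := Rabs_le_between (fM x); have := Rabs_le_between (gM y).
  have := Rabs_le_between (fM (fun _ => 0)); have := Rabs_le_between (gM (fun _ => 0)).
  by rewrite /Rdiv Rmult_0_l; lra.
have [z0 xz0] := shift_into_unit_cube x.
rewrite -(doubling_shift f g eps z0 x y pf pg).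
apply: (zb_max (pair _ _)); case=> k /=; first exact: xz0.
have yk : Rabs (y k - x k) <= 1 + K.
  have := coord_le_enorm (vsub x y) k; rewrite -/(enorm _) Rabs_minus_sym.
  have : enorm (vsub x y) <= 1 + K.
    have := enorm_sqr (vsub x y); have := enorm_ge0 (vsub x y); nra.
  rewrite /vsub; lra.
by have := Rabs_le_between yk; have := xz0 k; rewrite /r; lra.
Qed.

Lemma dot_vsubC x y : dot (vsub x y) (vsub x y) = dot (vsub y x) (vsub y x).
Proof. by rewrite -!enorm_sqr vsubC. Qed.

Lemma doubling_swap_opp f g eps x y :
  doubling (fun y => - g y) (fun x => - f x) eps y x = doubling f g eps x y.
Proof. by rewrite /doubling dot_vsubC; ring. Qed.

Lemma superdiff_at_doubling_max {f g eps xb yb} : 0 < eps ->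
  (forall x, doubling f g eps x yb <= doubling f g eps xb yb) ->
  superdiff f xb (fun k => / eps * vsub xb yb k).
Proof.
move=> eps0 xb_max e e0; exists (2 * eps * e); split=> [|y y_xb]; first nra.
have := xb_max y; rewrite /doubling.
have -> : vsub y yb = (fun k => vsub xb yb k + 1 * vsub y xb k).
  by apply: functional_extensionality => k; rewrite /vsub; ring.
rewrite dot_expand dotZl -(enorm_sqr (vsub y xb)).
have := enorm_ge0 (vsub y xb); set b := enorm (vsub y xb) in y_xb *.
set C := dot (vsub xb yb) (vsub y xb); set D := dot (vsub xb yb) (vsub xb yb) => b0.
have -> : (D + 2 * 1 * C + 1 * 1 * (b * b)) / (2 * eps) =
  D / (2 * eps) + / eps * C + b * b / (2 * eps) by field; lra.
suff : b * b / (2 * eps) <= e * b by lra.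
apply: (Rle_trans _ (2 * eps * e * b / (2 * eps))); last by right; field; lra.
by apply: Rmult_le_compat_r; [apply/Rlt_le/Rinv_0_lt_compat; lra | nra].
Qed.

Lemma subdiff_of_superdiff_opp v x q :
  superdiff (fun y => - v y) x (fun k => - q k) -> subdiff v x q.
Proof.
move=> sd e /sd[d [d0 hd]]; exists d; split=> // y xy; have := hd y xy.
have -> : dot (fun k => - q k) (vsub y x) = -1 * dot q (vsub y x).
  by rewrite -dotZl; apply: eq_bigr => k _; ring.
lra.
Qed.

Lemma subdiff_at_doubling_max {f g eps xb yb} : 0 < eps ->
  (forall y, doubling f g eps xb y <= doubling f g eps xb yb) ->
  subdiff g yb (fun k => / eps * vsub xb yb k).
Proof.
move=> eps0 yb_max; apply: subdiff_of_superdiff_opp.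
have -> : (fun k => - (/ eps * vsub xb yb k)) = (fun k => / eps * vsub yb xb k).
  by apply: functional_extensionality => k; rewrite /vsub; ring.
apply: (superdiff_at_doubling_max (g := fun x => - f x)) => // y.
by rewrite !doubling_swap_opp.
Qed.

Lemma doubling_max_dist_le {f g eps L xb yb} : 0 < eps -> 0 <= L ->
  (forall x y, Rabs (f x - f y) <= L * enorm (vsub x y)) \/
  (forall x y, Rabs (g x - g y) <= L * enorm (vsub x y)) ->
  doubling f g eps yb yb <= doubling f g eps xb yb ->
  doubling f g eps xb xb <= doubling f g eps xb yb ->
  enorm (vsub xb yb) <= 2 * eps * L.
Proof.
move=> eps0 L0 lip; rewrite /doubling !vsubxx dot0l -enorm_sqr /Rdiv Rmult_0_l.
have := enorm_ge0 (vsub xb yb); set e := enorm (vsub xb yb) => e0 yy_le xx_le.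
have quad_le : e * e * / (2 * eps) <= L * e.
  by case: lip => lip; have := Rabs_le_between (lip xb yb); rewrite -/e; lra.
have : e * e <= (2 * eps * L) * e.
  have -> : e * e = 2 * eps * (e * e * / (2 * eps)) by field; lra.
  have -> : 2 * eps * L * e = 2 * eps * (L * e) by ring.
  by apply: Rmult_le_compat_l; lra.
case: e0 => [e_pos | <-] ee; first exact: Rmult_le_reg_r e_pos ee.
by have := Rmult_le_pos _ _ (Rlt_le _ _ eps0) L0; lra.
Qed.

End Doubling.

Definition visc_subsolution {N m} (H : hamiltonians N m) (B : 'I_m -> 'I_m -> R)
    (lam c : R) (u : vec N -> 'I_m -> R) : Prop :=
  (forall i, cont_fun (fun x => u x i)) /\ periodic u /\
  (forall i x p, superdiff (fun y => u y i) x p -> H i x p + sysop B lam u x i <= c).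

Definition visc_supersolution {N m} (H : hamiltonians N m) (B : 'I_m -> 'I_m -> R)
    (lam c : R) (u : vec N -> 'I_m -> R) : Prop :=
  (forall i, cont_fun (fun x => u x i)) /\ periodic u /\
  (forall i x p, subdiff (fun y => u y i) x p -> c <= H i x p + sysop B lam u x i).

Lemma visc_solution_sub {N m} {H : hamiltonians N m} {B lam c u} :
  visc_solution H B lam c u -> visc_subsolution H B lam c u.
Proof. by case=> [cu [pu [sub _]]]. Qed.

Lemma visc_solution_super {N m} {H : hamiltonians N m} {B lam c u} :
  visc_solution H B lam c u -> visc_supersolution H B lam c u.
Proof. by case=> [cu [pu [_ super]]]. Qed.

Lemma sysopB {N m} (B : 'I_m -> 'I_m -> R) l1 l2 (u v : vec N -> 'I_m -> R) x y i :
  sysop B l1 u x i - sysop B l2 v y i =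
  \big[Rplus/0]_(j < m) (B i j * (u x j - v y j)) + (l1 * u x i - l2 * v y i).
Proof.
have -> : \big[Rplus/0]_(j < m) (B i j * (u x j - v y j)) =
  \big[Rplus/0]_(j < m) (B i j * u x j) + -1 * \big[Rplus/0]_(j < m) (B i j * v y j).
  by rewrite -sumRZ -sumRD; apply: eq_bigr => j _; ring.
by rewrite /sysop; ring.
Qed.

Section Comparison.
Context {N m : nat} {H : hamiltonians N m} {B : 'I_m -> 'I_m -> R}.
Hypotheses (H_cont : ham_continuous H) (H_periodic : ham_periodic H).
Hypotheses (B_off : forall i j, i <> j -> B i j <= 0)
  (B_row : forall i, \big[Rplus/0]_(j < m) B i j = 0).
Context {l1 l2 c L : R} {u v : vec N -> 'I_m -> R}.
Hypotheses (u_sub : visc_subsolution H B l1 c u) (v_super : visc_supersolution H B l2 c v).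
Hypotheses (L0 : 0 <= L) (lip : (forall i x y, Rabs (u x i - u y i) <= L * enorm (vsub x y)) \/
  (forall i x y, Rabs (v x i - v y i) <= L * enorm (vsub x y))).

Let Phi i eps := doubling (fun x => u x i) (fun y => v y i) eps.

Lemma ex_max_doubling_system (i0 : 'I_m) eps : 0 < eps ->
  exists i xb yb, forall j x y, Phi j eps x y <= Phi i eps xb yb.
Proof.
move=> eps0; case: u_sub v_super => [cu [pu _]] [cv [pv _]].
have /functional_choice[XY XY_max] : forall i, exists xy : vec N * vec N,
    forall x y, Phi i eps x y <= Phi i eps xy.1 xy.2.
  move=> i; have [xb [yb max_i]] := ex_max_doubling eps (cu i) (periodic_component i pu)
    (cv i) (periodic_component i pv) eps0.
  by exists (xb, yb).
have [i i_max] := ex_argmax_ord i0 (fun i => Phi i eps (XY i).1 (XY i).2).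
by exists i, (XY i).1, (XY i).2 => j x y; apply: Rle_trans (XY_max j x y) (i_max j).
Qed.

Lemma comparison_defect (i0 : 'I_m) eta : 0 < eta -> exists i xb yb,
  (forall j x, u x j - v x j <= u xb i - v yb i) /\ l1 * u xb i - l2 * v yb i <= eta.
Proof.
move=> eta0; case: u_sub v_super => [_ [_ u_sub']] [_ [_ v_super']].
have [d [d0 H_uc]] := ham_unif_cont_x_all H_cont H_periodic (2 * L + 1) _ eta0.
(* [eps] is chosen so that the doubling maxima satisfy [|xb - yb| <= 2 eps L < d] *)
set eps := d / (2 * L + 2).
have eps0 : 0 < eps by apply: Rdiv_lt_0_compat; lra.
have epsL : 2 * eps * L < d.
  rewrite /eps (_ : 2 * (d / (2 * L + 2)) * L = d * (L / (L + 1))); last by field; lra.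
  have : L / (L + 1) < 1 by apply: (Rmult_lt_reg_r (L + 1)); [lra | field_simplify; lra].
  by nra.
have [i [xb [yb Phi_max]]] := ex_max_doubling_system i0 _ eps0.
have Phi_diag j x : u x j - v x j = Phi j eps x x.
  by rewrite /Phi /doubling vsubxx dot0l /Rdiv Rmult_0_l; ring.
have Phi_le i' : Phi i' eps xb yb <= u xb i' - v yb i'.
  rewrite /Phi /doubling; have := dot_ge0 (vsub xb yb).
  by move=> D0; have := Rle_mult_inv_pos _ (2 * eps) D0 ltac:(lra); lra.
exists i, xb, yb; split=> [j x|].
  by rewrite Phi_diag; apply: Rle_trans (Phi_max j x x) (Phi_le i).
have dist_le := doubling_max_dist_le eps0 L0
  ltac:(by case: lip => h; [left | right]; apply: h) (Phi_max i yb yb) (Phi_max i xb xb).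
set p := fun k => / eps * vsub xb yb k.
have p_le : enorm p <= 2 * L + 1.
  rewrite /p enormZ Rabs_pos_eq; last exact/Rlt_le/Rinv_0_lt_compat.
  apply: (Rle_trans _ (/ eps * (2 * eps * L))).
    by apply: Rmult_le_compat_l => //; exact/Rlt_le/Rinv_0_lt_compat.
  by rewrite (_ : / eps * (2 * eps * L) = 2 * L); [lra | field; lra].
have sub_ineq := u_sub' i xb p (superdiff_at_doubling_max eps0 (fun x => Phi_max i x yb)).
have super_ineq := v_super' i yb p (subdiff_at_doubling_max eps0 (fun y => Phi_max i xb y)).
have coupling : 0 <= \big[Rplus/0]_(j < m) (B i j * (u xb j - v yb j)).
  apply: coupling_row_max_ge0 => [j ji | | j]; [exact: B_off (nesym ji) | exact: B_row |].
  by have := Phi_max j xb yb; rewrite /Phi /doubling; lra.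
have H_close : Rabs (H i yb p - H i xb p) < eta by apply: H_uc => //; rewrite vsubC; lra.
by have := sysopB B l1 l2 u v xb yb i; have := Rle_abs (H i yb p - H i xb p); lra.
Qed.

End Comparison.

Lemma coercive_sublevel_bound {alpha : R -> R} C : coercive alpha ->
  exists R0, 0 <= R0 /\ forall r, alpha r <= C -> r <= R0.
Proof.
move=> /(_ (C + 1))[r0 r0_big]; exists (Rmax r0 0); split=> [|r ar]; first exact: Rmax_r.
case: (Rle_or_lt r (Rmax r0 0)) => // /Rlt_le/(Rle_trans _ _ _ (Rmax_l r0 0))/r0_big.
lra.
Qed.

Definition coupling_norm {m} (B : 'I_m -> 'I_m -> R) : R :=
  \big[Rplus/0]_(i < m) \big[Rplus/0]_(j < m) Rabs (B i j).

Lemma Rabs_coupling_le {m} (B : 'I_m -> 'I_m -> R) i (z : 'I_m -> R) K : 0 <= K ->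
  (forall j, Rabs (z j) <= K) -> Rabs (\big[Rplus/0]_(j < m) (B i j * z j)) <= coupling_norm B * K.
Proof.
move=> K0 zK.
apply: Rle_trans (Rabs_sumR_le _) _.
apply: (Rle_trans _ (\big[Rplus/0]_(j < m) (K * Rabs (B i j)))).
  apply: sumR_le => j; rewrite Rabs_mult.
  by have := zK j; have := Rabs_pos (B i j); have := Rabs_pos (z j); nra.
rewrite sumRZ Rmult_comm; apply: Rmult_le_compat_r => //.
by apply: (sumR_term_le (fun i => \big[Rplus/0]_(j < m) Rabs (B i j))) => k; apply: sumR_ge0 => j; apply: Rabs_pos.
Qed.

Section SolutionEstimates.
Context {N m : nat} {H : hamiltonians N m} {alpha beta : R -> R} {B : 'I_m -> 'I_m -> R}.
Hypothesis H_bounds : ham_bounds H alpha beta.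
Hypotheses (B_off : forall i j, i <> j -> B i j <= 0)
  (B_row : forall i, \big[Rplus/0]_(j < m) B i j = 0).
Context {lam c : R} {u : vec N -> 'I_m -> R}.

Lemma subsolution_lipschitz K low R0 : 0 <= K -> 0 <= R0 ->
  (forall r, alpha r <= c - low + coupling_norm B * K -> r <= R0) ->
  visc_subsolution H B lam c u -> (forall x j, Rabs (u x j) <= K) ->
  (forall x i, low <= lam * u x i) ->
  forall i x y, Rabs (u x i - u y i) <= R0 * enorm (vsub x y).
Proof.
move=> K0 R00 R0_big [cu [pu u_sub]] uK u_low i.
apply: (lipschitz_of_superdiff_bound (cu i) (periodic_component i pu) _ R00) => x p sd.
apply: R0_big; have := u_sub i x p sd; rewrite /sysop.
have := Rabs_le_between (Rabs_coupling_le B i (u x) K K0 (uK x)).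
by have := proj1 (H_bounds i x p); have := u_low x i; lra.
Qed.

Lemma supersolution_lower_bound (i0 : 'I_m) : 0 < lam ->
  visc_supersolution H B lam c u -> forall x j, c - beta 0 <= lam * u x j.
Proof.
move=> lam0 [cu [pu u_super]].
have /functional_choice[X X_min] : forall j, exists x0, forall x, u x0 j <= u x j.
  by move=> j; apply: periodic_min (cu j) (periodic_component j pu).
have [i i_min] := ex_argmax_ord i0 (fun j => - u (X j) j).
have u_min j x : u (X i) i <= u x j by have := i_min j; have := X_min j x; lra.
have sd0 : subdiff (fun y => u y i) (X i) (fun _ => 0).
  move=> e e0; exists 1; split=> [|y _]; first lra.
  rewrite dot0l; have := u_min i y; have := enorm_ge0 (vsub y (X i)).
  by move=> E0; have := Rmult_le_pos _ _ (Rlt_le _ _ e0) E0; lra.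
have := u_super i (X i) _ sd0; rewrite /sysop.
have := proj2 (H_bounds i (X i) (fun _ => 0)); rewrite enorm0.
have : 0 <= \big[Rplus/0]_(j < m) (B i j * - u (X i) j).
  apply: coupling_row_max_ge0 => [j ji | | j]; [exact: B_off (nesym ji) | exact: B_row |].
  by have := u_min j (X i); lra.
rewrite (eq_bigr (fun j => -1 * (B i j * u (X i) j))) => [|j _]; last ring.
rewrite sumRZ => coupling H_le super x j.
by have := Rmult_le_compat_l _ _ _ (Rlt_le _ _ lam0) (u_min j x); lra.
Qed.

End SolutionEstimates.

Lemma scaled_bounded_vanishing {T : Type} {f : R -> T -> R} {K} : 0 <= K ->
  (forall lam, 0 < lam -> forall t, Rabs (f lam t) <= K) ->
  forall eps, 0 < eps -> exists delta, 0 < delta /\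
    forall lam, 0 < lam < delta -> forall t, Rabs (lam * f lam t) <= eps.
Proof.
move=> K0 fK eps eps0; exists (eps / (K + 1)); split=> [|lam [lam0 lam_small] t].
  by apply: Rdiv_lt_0_compat; lra.
rewrite Rabs_mult Rabs_pos_eq; last lra.
apply: (Rle_trans _ (eps / (K + 1) * K)).
  by apply: Rmult_le_compat; try lra; [apply: Rabs_pos | apply: fK].
apply: (Rmult_le_reg_r (K + 1)); first lra.
by rewrite (_ : eps / (K + 1) * K * (K + 1) = eps * K); [nra | field; lra].
Qed.

Section VanishingDiscount.
Context {N m : nat} {H : hamiltonians N m} {alpha beta : R -> R} {B : 'I_m -> 'I_m -> R}.
Context {c : R} {w : vec N -> 'I_m -> R} {u : R -> vec N -> 'I_m -> R}.
Hypotheses (H_cont : ham_continuous H) (H_periodic : ham_periodic H)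
  (H_bounds : ham_bounds H alpha beta) (alpha_coercive : coercive alpha).
Hypotheses (B_off : forall i j, i <> j -> B i j <= 0)
  (B_row : forall i, \big[Rplus/0]_(j < m) B i j = 0).
Hypotheses (w_sol : visc_solution H B 0 c w)
  (u_sol : forall lam, 0 < lam -> visc_solution H B lam c (u lam)).
Variable i0 : 'I_m.

Lemma critical_solution_estimates : exists Kw Rw, 0 <= Kw /\ 0 <= Rw /\
  (forall x j, Rabs (w x j) <= Kw) /\
  (forall i x y, Rabs (w x i - w y i) <= Rw * enorm (vsub x y)).
Proof.
have [cw [pw _]] := w_sol.
have [Kw wK] : exists Kw, forall j x, Rabs (w x j) <= Kw.
  apply: ub_fin_family => j.
  exact: periodic_bounded (cw j) (periodic_component j pw).
have Kw0 : 0 <= Kw by have := wK i0 (fun _ => 0); have := Rabs_pos (w (fun _ => 0) i0); lra.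
have [Rw [Rw0 Rw_big]] := coercive_sublevel_bound (c - 0 + coupling_norm B * Kw) alpha_coercive.
have wK' x j : Rabs (w x j) <= Kw := wK j x.
exists Kw, Rw; do 3 (split=> //).
apply: (subsolution_lipschitz H_bounds _ _ _ Kw0 Rw0 Rw_big (visc_solution_sub w_sol)) => // x i.
by rewrite Rmult_0_l; apply: Rle_refl.
Qed.

Lemma discounted_equi_bounded : exists K, 0 <= K /\
  forall lam, 0 < lam -> forall x j, Rabs (u lam x j) <= K.
Proof.
have [Kw [Rw [Kw0 [Rw0 [wK w_lip]]]]] := critical_solution_estimates.
exists (2 * Kw); split=> [|lam lam0 x j]; first lra.
have [u_sub u_super] := (visc_solution_sub (u_sol _ lam0), visc_solution_super (u_sol _ lam0)).
(* compare [u lam] with [w] in both directions, with a defect [lam t] that we let go to 0 *)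
apply: Rabs_le; split; apply: Rle_plus_epsilon => t t0.
- have [i [xb [yb [max_gap defect]]]] := comparison_defect H_cont H_periodic B_off B_row
    (visc_solution_sub w_sol) u_super Rw0 (or_introl w_lip) i0 _ (Rmult_lt_0_compat _ _ lam0 t0).
  have : - u lam yb i <= t by apply: (Rmult_le_reg_l lam) => //; lra.
  have := max_gap j x; have := Rabs_le_between (wK x j); have := Rabs_le_between (wK xb i).
  lra.
- have [i [xb [yb [max_gap defect]]]] := comparison_defect H_cont H_periodic B_off B_row
    u_sub (visc_solution_super w_sol) Rw0 (or_intror w_lip) i0 _ (Rmult_lt_0_compat _ _ lam0 t0).
  have : u lam xb i <= t by apply: (Rmult_le_reg_l lam) => //; lra.
  have := max_gap j x; have := Rabs_le_between (wK x j); have := Rabs_le_between (wK yb i).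
  lra.
Qed.

Lemma discounted_equi_lipschitz : exists L, forall lam, 0 < lam -> forall i x y,
  Rabs (u lam x i - u lam y i) <= L * enorm (vsub x y).
Proof.
have [K [K0 uK]] := discounted_equi_bounded.
have [L [L0 L_big]] :=
  coercive_sublevel_bound (c - (c - beta 0) + coupling_norm B * K) alpha_coercive.
exists L => lam lam0.
apply: (subsolution_lipschitz H_bounds _ _ _ K0 L0 L_big (visc_solution_sub (u_sol _ lam0))).
  exact: uK.
exact: supersolution_lower_bound H_bounds B_off B_row _ _ _ i0 lam0 (visc_solution_super (u_sol _ lam0)).
Qed.

End VanishingDiscount.

Theorem proposition1p3 (N m : nat) (H : hamiltonians N m) (alpha beta : R -> R)
  (B : 'I_m -> 'I_m -> R) (c : R) (u : R -> vec N -> 'I_m -> R) :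
  ham_continuous H -> ham_periodic H -> ham_convex H ->
  coercive alpha -> coercive beta -> ham_bounds H alpha beta ->
  coupling_matrix B ->
  critical_value H B c ->
  (forall lam, 0 < lam -> visc_solution H B lam c (u lam)) ->
  (exists L K : R,
     forall lam, 0 < lam -> forall i x y,
       Rabs (u lam x i - u lam y i) <= L * enorm (vsub x y) /\
       Rabs (u lam x i) <= K) /\
  (forall eps, 0 < eps -> exists delta, 0 < delta /\
     forall lam, 0 < lam < delta -> forall i x, Rabs (lam * u lam x i) <= eps).
Proof.
move=> H_cont H_periodic _ alpha_coercive _ H_bounds [B_off [B_row _]] critical u_sol.
case: m => [|m] in H B u H_cont H_periodic H_bounds B_off B_row critical u_sol *.
  by split=> [|eps eps0]; [exists 0, 0 | exists 1; split; first lra] => ? ? [].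
have [w w_sol] := proj2 (critical c) erefl.
have [K [K0 uK]] := discounted_equi_bounded H_cont H_periodic H_bounds alpha_coercive
  B_off B_row w_sol u_sol ord0.
have [L u_lip] := discounted_equi_lipschitz H_cont H_periodic H_bounds alpha_coercive
  B_off B_row w_sol u_sol ord0.
split; first by exists L, K => lam lam0 i x y; split; [apply: u_lip | apply: uK].
move=> eps eps0; have [delta [delta0 small]] :=
  scaled_bounded_vanishing (f := fun lam (xi : vec N * 'I_m.+1) => u lam xi.1 xi.2) K0
    (fun lam lam0 xi => uK lam lam0 xi.1 xi.2) _ eps0.
by exists delta; split=> // lam lam_small i x; apply: (small lam lam_small (x, i)).
Qed.
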